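(* If $\phi^{\alpha_1\cdots\alpha_n}\in\mathcal F$, then $\dfrac{\partial\phi^{\alpha_1\cdots\alpha_n}}{\partial\mu_\beta}\in\mathcal F$.
   Context: Work in 4-dimensional Minkowski space with metric $g_{\alpha\beta}$ of signature $(-,+,+,+)$; indices are raised and lowered with $g$ and repeated indices are summed. $\lambda$ is a real scalar, $\mu_\beta$ is a time-like covector and $\gamma=\sqrt{-\mu^\alpha\mu_\alpha}>0$. The family $\mathcal F$ consists of the (smooth) Lorentz-covariant (isotropic) tensor-valued functions $\phi^{\alpha_1\cdots\alpha_n}(\lambda,\mu_\beta)$ which are totally symmetric in their indices and whose derivative $\partial\phi^{\alpha_1\cdots\alpha_n}/\partial\mu_\beta$ is totally symmetric in $\alpha_1,\dots,\alpha_n,\beta$. *)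

From HB Require Import structures.
From mathcomp Require Import all_boot all_order all_algebra all_fingroup.
From mathcomp Require Import all_classical all_reals all_analysis.
Set Implicit Arguments. Unset Strict Implicit. Unset Printing Implicit Defensive.
Import Order.TTheory GRing.Theory Num.Theory.
Import numFieldNormedType.Exports.
Local Open Scope classical_set_scope.
Local Open Scope ring_scope.

Section Defs.
Variable R : realType.

Definition minkowski : 'M[R]_4 :=
  \matrix_(i, j) (if i == j then (if i == ord0 then -1 else 1) else 0).

(* g-square of a covector mu_beta (row vector of components):
   mu^alpha mu_alpha = g^{alpha beta} mu_alpha mu_beta (g^{-1} = g). *)
Definition msq (mu : 'rV[R]_4) : R := (mu *m minkowski *m mu^T) ord0 ord0.

Definition timelike (mu : 'rV[R]_4) : Prop := msq mu < 0.

(* Lorentz transformations Lambda^alpha_beta (entry (alpha,beta)):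
   Lambda^T g Lambda = g (full Lorentz group O(1,3)). *)
Definition lorentz (L : 'M[R]_4) : Prop := L^T *m minkowski *m L = minkowski.

(* A tensor-valued function phi^{alpha_1 ... alpha_n}(lambda, mu_beta):
   its components are indexed by maps 'I_n -> 'I_4. *)
Definition tfun (n : nat) := R -> 'rV[R]_4 -> ('I_n -> 'I_4) -> R.

(* Partial derivatives of a scalar function f(lambda, mu) with respect to
   lambda (None) or to the component mu_j (Some j). *)
Definition line (d : option 'I_4) (f : R -> 'rV[R]_4 -> R) (l : R)
    (m : 'rV[R]_4) : R -> R :=
  match d with
  | None => fun t => f (l + t) m
  | Some j => fun t => f l (m + t *: delta_mx ord0 j)
  end.

Definition pd (d : option 'I_4) (f : R -> 'rV[R]_4 -> R) : R -> 'rV[R]_4 -> R :=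
  fun l m => derive1 (line d f l m) 0.

Definition has_pd (d : option 'I_4) (f : R -> 'rV[R]_4 -> R) l m : Prop :=
  derivable (line d f l m) 0 1.

Definition dom : set (R * 'rV[R]_4) := [set p | timelike p.2].

Definition smooth (f : R -> 'rV[R]_4 -> R) : Prop :=
  forall s : seq (option 'I_4),
    let g := foldr pd f s in
    (forall (d : option 'I_4) (p : R * 'rV[R]_4), dom p -> has_pd d g p.1 p.2) /\
    (forall p : R * 'rV[R]_4, dom p ->
       {for p, continuous (fun q : R * 'rV[R]_4 => g q.1 q.2)}).

Definition covariant n (phi : tfun n) : Prop :=
  forall (L : 'M[R]_4) (l : R) (mu : 'rV[R]_4), lorentz L -> timelike mu ->
  forall a : 'I_n -> 'I_4,
    phi l (mu *m invmx L) a =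
    \sum_(b : {ffun 'I_n -> 'I_4}) (\prod_(i < n) L (a i) (b i)) * phi l mu b.

Definition tsym n (phi : tfun n) : Prop :=
  forall (l : R) (mu : 'rV[R]_4), timelike mu ->
  forall (s : 'S_n) (a : 'I_n -> 'I_4), phi l mu (a \o s) = phi l mu a.

(* The derivative d phi^{alpha_1..alpha_n} / d mu_beta, as an (n+1)-index
   tensor function with beta as the last index. *)
Definition dmu n (phi : tfun n) : tfun n.+1 :=
  fun l mu a =>
    pd (Some (a ord_max)) (fun l' mu' => phi l' mu' (fun i => a (widen_ord (leqnSn n) i))) l mu.

Definition inF n (phi : tfun n) : Prop :=
  [/\ forall a, smooth (fun l mu => phi l mu a),
      covariant phi,
      tsym phi &
      tsym (dmu phi)].

End Defs.

From Pilot Require Import Defs.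
From HB Require Import structures.
From mathcomp Require Import all_boot all_order all_algebra all_fingroup.
From mathcomp Require Import all_classical all_reals all_analysis.
From mathcomp Require Import ring lra.
Set Implicit Arguments. Unset Strict Implicit. Unset Printing Implicit Defensive.
Import Order.TTheory GRing.Theory Num.Theory.
Import numFieldNormedType.Exports.
Local Open Scope classical_set_scope.
Local Open Scope ring_scope.

(* Iterated derivatives of d phi / d mu are iterated derivatives of phi, so
   smoothness is inherited.
   Covariance is obtained by differentiating the covariance identity of phi:
   after the substitution mu |-> mu Lambda^-1 the coordinate derivative along
   e_beta becomes the directional derivative of phi along the row beta of
   Lambda, which for a C^1 function is sum_k Lambda^beta_k d phi / d mu_k.
   For the symmetry of the n + 2 indices of the second derivative it suffices
   to treat generators of the symmetric group: transpositions fixing the last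
   index come from the assumed symmetry of d phi / d mu (derivatives being
   local on the open time-like cone), and the swap of the last two indices is
   Schwarz's theorem, proved here for functions with continuous second
   partial derivatives. *)

Lemma near_line (R : numFieldType) (V : normedModType R) (x v : V) (P : set V) :
  (\forall y \near x, P y) -> \forall t \near (0 : R), P (x + t *: v).
Proof.
have cx : {for 0, continuous (fun t : R => x + t *: v)}.
  by apply: continuousD; [exact: cst_continuous | exact: scalel_continuous].
by move=> xP; apply: cx; rewrite /= scale0r addr0.
Qed.

Lemma is_derive_bigsum (K : numFieldType) (V W : normedModType K) (I : finType)
    (h : I -> V -> W) (x v : V) (dh : I -> W) :
  (forall i, is_derive x v (h i) (dh i)) ->
  is_derive x v (fun y => \sum_i h i y) (\sum_i dh i).
Proof.
move=> hdh; rewrite unlock; elim: (index_enum I) => [|i r IHr] /=.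
  exact: is_derive_cst.
exact: is_deriveD.
Qed.

Lemma mean_value_bound (R : realType) (g dg : R -> R) (x c M : R) :
  (forall s, `|s| <= `|x| -> is_derive s (1 : R) g (dg s)) ->
  (forall s, `|s| <= `|x| -> `|dg s - c| <= M) ->
  `|g x - g 0 - x * c| <= M * `|x|.
Proof.
move=> dgE dgM; pose G := g - c *: (@id R).
have GE s : `|s| <= `|x| -> is_derive s (1 : R) G (dg s - c).
  by move=> sx; rewrite -[c in _ - c]mulr1; apply: is_deriveB; exact: dgE.
have segment a b : a <= b -> `|a| <= `|x| -> `|b| <= `|x| ->
    `|G b - G a| <= M * (b - a).
  move=> ab ax bx.
  have abx z : z \in `[a, b] -> `|z| <= `|x|.
    rewrite in_itv /= => /andP[az zb]; rewrite ler_norml.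
    by move: ax bx; rewrite !ler_norml => /andP[+ _] /andP[_ +]; lra.
  have Gc : {within `[a, b], continuous G}.
    apply: derivable_within_continuous => z /abx zx.
    by case: (GE z zx).
  have [z /abx zx ->] := MVT_segment ab (fun z zab => GE z (abx z (subset_itv_oo_cc zab))) Gc.
  by rewrite normrM [`|b - a|]ger0_norm ?subr_ge0 // ler_wpM2r ?subr_ge0 ?dgM.
have -> : g x - g 0 - x * c = G x - G 0.
  by rewrite /G !fctE /= scaler0 subr0 [c *: x]mulrC; ring.
have [x0|x0] := lerP 0 x.
  by rewrite (ger0_norm x0) -[x in M * x]subr0 segment ?normr0.
by rewrite distrC (ltr0_norm x0) -[- x]sub0r; apply: segment; rewrite ?normr0 // ltW.
Qed.

Section PartialDerivatives.
Variables (R : realType) (m : nat).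
Implicit Types (f : 'rV[R]_m -> R) (mu nu w : 'rV[R]_m).

Local Notation e k := (delta_mx ord0 k : 'rV[R]_m).

Definition partial f (k : 'I_m) nu : R := derive1 (fun t => f (nu + t *: e k)) 0.

Definition has_partial f (k : 'I_m) nu : Prop :=
  derivable (fun t : R => f (nu + t *: e k)) 0 1.

Lemma is_derive_partial f k nu s : has_partial f k (nu + s *: e k) ->
  is_derive s (1 : R) (fun t => f (nu + t *: e k)) (partial f k (nu + s *: e k)).
Proof.
move=> /derivableP fk; rewrite /partial derive1E -[X in is_derive _ _ _ X]mulr1.
have -> : (fun t => f (nu + t *: e k)) =
    (fun t => f (nu + s *: e k + t *: e k)) \o (fun t => t - s).
  by apply/funext => t /=; rewrite -addrA -scalerDl [s + _]addrC subrK.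
apply: is_derive1_comp; last exact: is_derive_shift.
by rewrite subrr.
Qed.

Lemma near_eq_partial f g k mu : (\forall nu \near mu, f nu = g nu) ->
  partial f k mu = partial g k mu.
Proof.
move=> fg; rewrite /partial !derive1E; apply: near_eq_derive.
exact: (near_line (P := fun nu => f nu = g nu) (e k) fg).
Qed.

Lemma ball_row mu nu (d : R) :
  0 < d -> (forall i, `|mu ord0 i - nu ord0 i| < d) -> ball mu d nu.
Proof. by move=> d0 H; split => // i j; rewrite (ord1 i); exact: H. Qed.

Definition row_prefix w (k : nat) : 'rV[R]_m :=
  \row_i (if (i < k)%N then w ord0 i else 0).

Lemma row_prefix0 w : row_prefix w 0 = 0.
Proof. by apply/rowP => i; rewrite !mxE. Qed.

Lemma row_prefix_full w : row_prefix w m = w.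
Proof. by apply/rowP => i; rewrite mxE ltn_ord. Qed.

Lemma row_prefixS w (k : 'I_m) : row_prefix w k.+1 = row_prefix w k + w ord0 k *: e k.
Proof.
apply/rowP => i; rewrite !mxE ltnS leq_eqVlt.
have [->|ik] := eqVneq i k; first by rewrite eqxx ltnn mulr1 add0r.
by rewrite (inj_eq val_inj) (negbTE ik) mulr0 addr0.
Qed.

Lemma increment_bound f mu w (d eps h : R) :
  (forall nu, ball mu d nu -> forall k,
     has_partial f k nu /\ `|partial f k nu - partial f k mu| <= eps) ->
  `|h| * \sum_i `|w ord0 i| < d ->
  `|f (mu + h *: w) - f mu - h * \sum_k w ord0 k * partial f k mu|
    <= eps * (`|h| * \sum_i `|w ord0 i|).
Proof.
set S := \sum_i _ => near_mu hS.
have wS i : `|w ord0 i| <= S by rewrite /S (bigD1 i) //= lerDl sumr_ge0.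
have near_segment (k : 'I_m) s : `|s| <= `|h * w ord0 k| ->
    ball mu d (mu + h *: row_prefix w k + s *: e k).
  move=> sk; apply: ball_row => [|i]; first by rewrite (le_lt_trans _ hS) // mulr_ge0 // sumr_ge0.
  apply: le_lt_trans hS; rewrite !mxE eqxx -addrA opprD addNKr normrN.
  have [->|ik] := eqVneq i k.
    by rewrite ltnn mulr0 add0r mulr1 (le_trans sk) // normrM ler_wpM2l.
  rewrite /= mulr0 addr0 normrM ler_wpM2l //.
  by case: ifP => _; rewrite ?normr0 ?(le_trans _ (wS i)).
(* Telescope along the staircase path through the points mu + h *: row_prefix w k:
   each step moves a single coordinate, where the mean value bound applies. *)
pose G k := f (mu + h *: row_prefix w k).
have -> : f (mu + h *: w) - f mu = \sum_(k < m) (G k.+1 - G k).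
  rewrite -(big_mkord xpredT (fun k => G k.+1 - G k)) telescope_sumr //.
  by rewrite /G row_prefix_full row_prefix0 scaler0 addr0.
rewrite mulr_sumr -sumrB /S !mulr_sumr; apply: le_trans (ler_norm_sum _ _ _) _.
apply: ler_sum => k _.
have base0 : G k = f ((mu + h *: row_prefix w k) + 0 *: e k) by rewrite scale0r addr0.
rewrite base0 /G row_prefixS scalerDr scalerA addrA mulrA -normrM.
pose b := mu + h *: row_prefix w k.
apply: (@mean_value_bound _ (fun t => f (b + t *: e k)) (fun s => partial f k (b + s *: e k))).
  by move=> s /near_segment /near_mu /(_ k) [fk _]; exact: is_derive_partial.
by move=> s /near_segment /near_mu /(_ k) [].
Qed.

Lemma near_continuous_le (g : 'rV[R]_m -> R) mu (eps : R) :
  {for mu, continuous g} -> 0 < eps -> \forall nu \near mu, `|g nu - g mu| <= eps.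
Proof.
by move=> /cvgrPdist_le /[apply]; apply: filterS => nu; rewrite distrC.
Qed.

Lemma is_derive_along_partials f mu w :
  (\forall nu \near mu, forall k, has_partial f k nu) ->
  (forall k, {for mu, continuous (partial f k)}) ->
  is_derive (0 : R) (1 : R) (fun t => f (mu + t *: w)) (\sum_k w ord0 k * partial f k mu).
Proof.
move=> f_near pf_cont; set L := \sum_k _; set F := fun t => f (mu + t *: w).
suff FL : (fun h : R => h^-1 *: ((F \o shift 0) (h *: 1) - F 0)) @ 0^' --> L.
  by split; [apply/cvg_ex; exists L | exact: cvg_lim].
apply/cvgrPdist_lt => eps eps0.
set S := \sum_i `|w ord0 i|.
have S1 : 0 < S + 1 by rewrite ltr_wpDl // sumr_ge0.
pose eps' := eps / (S + 1).
have eps'0 : 0 < eps' by rewrite divr_gt0.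
have pf_near : \forall nu \near mu, forall k, `|partial f k nu - partial f k mu| <= eps'.
  by apply: (filter_forall (F := nbhs mu)) => k; apply: near_continuous_le.
have /nbhs_ballP[d d0 near_mu] : \forall nu \near mu,
    (forall k, has_partial f k nu) /\ forall k, `|partial f k nu - partial f k mu| <= eps'.
  exact: (filterI (F := nbhs mu)).
rewrite near_withinE; apply/nbhs_ballP; exists (d / (S + 1)) => [|h]; first by rewrite /= divr_gt0.
rewrite /ball /= sub0r normrN ltr_pdivlMr // => hd h0.
have hS : `|h| * S < d by apply: le_lt_trans hd; rewrite ler_wpM2l // lerDl.
have incr : `|F h - F 0 - h * L| <= eps' * (`|h| * S).
  rewrite /F scale0r addr0; apply: increment_bound hS => nu /near_mu[fk pk] k.
  by split; [exact: fk | exact: pk].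
rewrite /= addr0 [h *: 1]mulr1.
rewrite -[X in `|X - _|](mulKf h0) -mulrBr normrM normfV -opprB normrN.
apply: le_lt_trans (ler_wpM2l _ incr) _; first by rewrite invr_ge0.
rewrite mulrCA mulKf ?normr_eq0 // /eps' mulrAC ltr_pdivrMr //.
by rewrite ltr_pM2l // ltrDl.
Qed.

Lemma second_difference_bound f mu j k (A eps h : R) : 0 <= h ->
  (forall s u, `|s| <= h -> `|u| <= h ->
     let nu := mu + s *: e j + u *: e k in
     [/\ has_partial f j nu, has_partial (partial f j) k nu &
         `|partial (partial f j) k nu - A| <= eps]) ->
  `|f (mu + h *: e k + h *: e j) - f (mu + h *: e j) - f (mu + h *: e k) + f mu
    - h * h * A| <= eps * h * h.
Proof.
move=> h0 near_mu; have hh : `|h| = h by rewrite ger0_norm.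
have hle : `|h| <= h by rewrite hh.
pose phi s := f (mu + h *: e k + s *: e j) - f (mu + s *: e j).
pose dphi s := partial f j (mu + h *: e k + s *: e j) - partial f j (mu + s *: e j).
have -> : f (mu + h *: e k + h *: e j) - f (mu + h *: e j) - f (mu + h *: e k) + f mu
    - h * h * A = phi h - phi 0 - h * (h * A).
  by rewrite /phi !scale0r !addr0 mulrA; ring.
suff : `|phi h - phi 0 - h * (h * A)| <= eps * h * `|h| by rewrite hh.
apply: (@mean_value_bound _ phi dphi); rewrite hh.
  move=> s sh; apply: is_deriveB; apply: is_derive_partial.
    by rewrite addrAC; have [] := near_mu s h sh hle.
  by have := near_mu s 0 sh; rewrite normr0 scale0r addr0 => /(_ h0) [].
move=> s sh; pose psi u := partial f j (mu + s *: e j + u *: e k).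
have -> : dphi s = psi h - psi 0 by rewrite /dphi /psi scale0r addr0 addrAC.
suff : `|psi h - psi 0 - h * A| <= eps * `|h| by rewrite hh.
apply: (@mean_value_bound _ psi); rewrite hh.
  by move=> u uh; apply: is_derive_partial; have [] := near_mu s u sh uh.
by move=> u uh; have [] := near_mu s u sh uh.
Qed.

Lemma partialC f mu j k :
  (\forall nu \near mu, forall i l, has_partial f i nu /\ has_partial (partial f i) l nu) ->
  {for mu, continuous (partial (partial f j) k)} ->
  {for mu, continuous (partial (partial f k) j)} ->
  partial (partial f j) k mu = partial (partial f k) j mu.
Proof.
move=> f_near cjk ckj.
set A := partial (partial f j) k mu; set B := partial (partial f k) j mu.
apply/eqP; rewrite -subr_eq0 -normr_le0; apply/ler_addgt0Pr => eps eps0; rewrite add0r.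
have eps2 : 0 < eps / 2 by rewrite divr_gt0.
have /nbhs_ballP[d d0 near_mu] : \forall nu \near mu,
    (forall i l, has_partial f i nu /\ has_partial (partial f i) l nu) /\
    `|partial (partial f j) k nu - A| <= eps / 2 /\
    `|partial (partial f k) j nu - B| <= eps / 2.
  apply: (filterI (F := nbhs mu)) => //; apply: (filterI (F := nbhs mu)); exact: near_continuous_le.
pose h := d / 4; have h0 : 0 < h by rewrite divr_gt0.
have in_ball (a b : 'I_m) s u : `|s| <= h -> `|u| <= h -> ball mu d (mu + s *: e a + u *: e b).
  move=> sh uh; apply: ball_row => // i; rewrite !mxE -addrA opprD addNKr normrN.
  apply: le_lt_trans (ler_normD _ _) _; rewrite !normrM.
  have e01 (c : 'I_m) : `|((ord0 == ord0) && (i == c))%:R : R| <= 1.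
    by case: (i == c); rewrite ?normr0 ?normr1.
  apply: (@le_lt_trans _ _ (h + h)); last by move: d0; rewrite /h /=; lra.
  by apply: lerD; rewrite -[X in _ <= X]mulr1 ler_pM.
(* Both iterated partials approximate the same second difference divided by h^2. *)
have Hjk : `|f (mu + h *: e k + h *: e j) - f (mu + h *: e j) - f (mu + h *: e k) + f mu
    - h * h * A| <= eps / 2 * h * h.
  apply: second_difference_bound (ltW h0) _ => s u sh uh.
  by have [/(_ j k)[fj fjk] [cA _]] := near_mu _ (in_ball j k s u sh uh).
have Hkj : `|f (mu + h *: e j + h *: e k) - f (mu + h *: e k) - f (mu + h *: e j) + f mu
    - h * h * B| <= eps / 2 * h * h.
  apply: second_difference_bound (ltW h0) _ => s u sh uh.
  by have [/(_ k j)[fk fkj] [_ cB]] := near_mu _ (in_ball k j s u sh uh).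
have hh0 : 0 < h * h by rewrite mulr_gt0.
rewrite -(ler_pM2l hh0) -{1}(gtr0_norm hh0) -normrM; move: Hkj Hjk.
rewrite (addrAC mu); set X := f _; set Y := f (mu + h *: e j); set Z := f (mu + h *: e k).
move=> Hkj Hjk; have -> : h * h * (A - B) =
    (X - Z - Y + f mu - h * h * B) - (X - Y - Z + f mu - h * h * A) by ring.
apply: le_trans (ler_normB _ _) _; apply: le_trans (lerD Hkj Hjk) _.
by rewrite -2!mulrDl -splitr -mulrA mulrC.
Qed.

End PartialDerivatives.

Section Minkowski.
Variable R : realType.

Lemma msqE (mu : 'rV[R]_4) :
  msq mu = \sum_i (if i == ord0 then -1 else 1) * mu ord0 i ^+ 2.
Proof.
rewrite /msq mxE; apply: eq_bigr => k _.
rewrite !mxE (bigD1 k) //= big1 => [|i ik]; last by rewrite !mxE (negbTE ik) mulr0.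
by rewrite !mxE eqxx addr0 mulrC mulrA expr2 mulrC.
Qed.

Lemma msq_continuous : continuous (@msq R).
Proof.
rewrite (funext msqE); apply: continuous_big => [|i _].
  exact: add_continuous.
move=> mu; apply: (@continuousM R _ (cst _) (fun nu : 'rV[R]_4 => nu ord0 i ^+ 2)).
  exact: cst_continuous.
by apply: (@continuousM R _ (fun nu : 'rV[R]_4 => nu ord0 i)); exact: coord_continuous.
Qed.

Lemma open_timelike : open [set mu : 'rV[R]_4 | timelike mu].
Proof. exact: open_comp (in1W msq_continuous) (@open_lt R 0). Qed.

Lemma near_timelike (mu : 'rV[R]_4) : timelike mu -> \forall nu \near mu, timelike nu.
Proof. by move=> tm; apply: open_nbhs_nbhs; split => //; exact: open_timelike. Qed.

Lemma minkowski_sq : Defs.minkowski R *m Defs.minkowski R = 1%:M.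
Proof.
apply/matrixP => i k; rewrite !mxE (bigD1 i) //= big1 => [|j ji]; last first.
  by rewrite !mxE eq_sym (negbTE ji) mul0r.
rewrite !mxE eqxx addr0; case: (i == k); last by rewrite mulr0.
by case: (i == ord0); rewrite ?mulrNN mulr1.
Qed.

Lemma lorentz_unit (L : 'M[R]_4) : lorentz L -> L \in unitmx.
Proof.
move=> HL; have : (Defs.minkowski R *m L^T *m Defs.minkowski R) *m L = 1%:M.
  by rewrite -!mulmxA (mulmxA L^T) HL minkowski_sq.
by case/mulmx1_unit.
Qed.

End Minkowski.

Lemma widen_lift_max n (i : 'I_n) : widen_ord (leqnSn n) i = lift ord_max i.
Proof. exact/val_inj/esym/lift_max. Qed.

Lemma widen_ord_maxP n (x : 'I_n.+1) :
  x != ord_max -> exists x' : 'I_n, x = widen_ord (leqnSn n) x'.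
Proof.
case: (unliftP ord_max x) => [x' ->|->] xmax; last by rewrite eqxx in xmax.
by exists x'; rewrite widen_lift_max.
Qed.

Section FfunRcons.
Variables (T : finType) (V : nmodType) (n : nat).

Definition ffun_rcons (b : {ffun 'I_n -> T}) (k : T) : {ffun 'I_n.+1 -> T} :=
  [ffun i => if unlift ord_max i is Some i' then b i' else k].

Lemma ffun_rcons_widen b k (i : 'I_n) : ffun_rcons b k (widen_ord (leqnSn n) i) = b i.
Proof. by rewrite ffunE widen_lift_max liftK. Qed.

Lemma ffun_rcons_max b k : ffun_rcons b k ord_max = k.
Proof. by rewrite ffunE unlift_none. Qed.

Lemma sum_ffun_rcons (G : {ffun 'I_n.+1 -> T} -> V) :
  \sum_b G b = \sum_(b : {ffun 'I_n -> T}) \sum_k G (ffun_rcons b k).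
Proof.
rewrite pair_big /= (reindex (fun p => ffun_rcons p.1 p.2)) //; apply: onW_bij.
exists (fun b : {ffun 'I_n.+1 -> T} => ([ffun i => b (widen_ord (leqnSn n) i)], b ord_max)).
  case=> b k /=; rewrite ffun_rcons_max; congr pair.
  by apply/ffunP => i; rewrite ffunE ffun_rcons_widen.
move=> b; apply/ffunP => i; rewrite ffunE /=.
by case: unliftP => [j ->|->] //; rewrite ffunE widen_lift_max.
Qed.

End FfunRcons.

Lemma perm_tperm_ind (T : finType) (z0 z : T) (P : {perm T} -> Prop) : z0 != z ->
  (forall s t, P s -> P t -> P (s * t)%g) ->
  (forall x y, x != z -> y != z -> P (tperm x y)) ->
  P (tperm z0 z) -> forall s, P s.
Proof.
move=> z0z Pmul Pfix Pz0 s.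
have Pz x : P (tperm x z).
  have [->|xz] := eqVneq x z.
    by rewrite tperm1 -(tperm1 z0); apply: Pfix.
  have [-> //|xz0] := eqVneq x z0.
  rewrite -(tpermJ_tperm z0z xz) conjgE tpermV.
  have Pz0x : P (tperm z0 x) by apply: Pfix.
  exact: Pmul _ _ Pz0x (Pmul _ _ Pz0 Pz0x).
have Pt x y : P (tperm x y).
  have [->|yz] := eqVneq y z; first exact: Pz.
  have [->|xz] := eqVneq x z; first by rewrite tpermC; exact: Pz.
  exact: Pfix.
have [ts -> _] := prod_tpermP s.
elim/big_ind: _ => [||[x y] _]; [rewrite -(tperm1 z0); exact: Pt | exact: Pmul | exact: Pt].
Qed.

Section Smoothness.
Variable R : realType.
Implicit Types (F G : R -> 'rV[R]_4 -> R) (l : R) (mu nu : 'rV[R]_4).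

Lemma smooth_pd F d : smooth F -> smooth (pd d F).
Proof. by move=> sF s; have := sF (rcons s d); rewrite foldr_rcons. Qed.

Lemma smooth_has_partial F l nu k : smooth F -> timelike nu -> has_partial (F l) k nu.
Proof. by move=> sF tn; have [sd _] := sF [::]; exact: (sd (Some k) (l, nu) tn). Qed.

Lemma smooth_continuous F l mu : smooth F -> timelike mu -> {for mu, continuous (F l)}.
Proof.
move=> sF tm; have [_ /(_ (l, mu) tm) Fc] := sF [::].
apply: (continuous_comp (f := fun nu => (l, nu))) Fc.
move=> A [[B C] /= [Bl Cmu] BCA]; apply: filterS Cmu => nu Cnu.
by apply: BCA; split => //; exact: nbhs_singleton.
Qed.

Lemma smooth_is_derive_along F l mu w : smooth F -> timelike mu ->
  is_derive (0 : R) (1 : R) (fun t => F l (mu + t *: w))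
    (\sum_k w ord0 k * pd (Some k) F l mu).
Proof.
move=> sF tm; apply: is_derive_along_partials => [|k].
  by apply: (filterS (F := nbhs mu)) (near_timelike tm) => nu tn k; exact: smooth_has_partial.
exact: smooth_continuous (smooth_pd (Some k) sF) tm.
Qed.

Lemma smooth_pdC F l mu j k : smooth F -> timelike mu ->
  pd (Some k) (pd (Some j) F) l mu = pd (Some j) (pd (Some k) F) l mu.
Proof.
move=> sF tm; apply: (@partialC _ _ (F l)).
- apply: (filterS (F := nbhs mu)) (near_timelike tm) => nu tn i i'.
  split; first exact: smooth_has_partial sF tn.
  exact: smooth_has_partial (smooth_pd (Some i) sF) tn.
- exact: smooth_continuous (smooth_pd (Some k) (smooth_pd (Some j) sF)) tm.
- exact: smooth_continuous (smooth_pd (Some j) (smooth_pd (Some k) sF)) tm.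
Qed.

Lemma eq_pd_timelike F G k l mu : timelike mu ->
  (forall nu, timelike nu -> F l nu = G l nu) -> pd (Some k) F l mu = pd (Some k) G l mu.
Proof.
by move=> tm FG; apply: near_eq_partial; exact: (filterS (F := nbhs mu)) FG (near_timelike tm).
Qed.

End Smoothness.

Section TensorFamily.
Variables (R : realType) (n : nat).

Lemma covariant_dmu (phi : tfun R n) :
  (forall a, smooth (fun l mu => phi l mu a)) -> covariant phi -> covariant (dmu phi).
Proof.
move=> sphi cov L l mu HL tm a.
pose j := a ord_max; pose a' i := a (widen_ord (leqnSn n) i).
pose c (b : {ffun 'I_n -> 'I_4}) := \prod_(i < n) L (a' i) (b i).
pose w := row j L.
pose D b k := pd (Some k) (fun l mu => phi l mu b) l mu.
have lorentz_line : \forall t \near 0,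
    phi l (mu *m invmx L + t *: delta_mx ord0 j) a' = \sum_b c b * phi l (mu + t *: w) b.
  apply: (filterS (F := nbhs 0)) (near_line w (near_timelike tm)) => t tt.
  rewrite -cov //; congr (phi _ _ _).
  by rewrite mulmxDl -scalemxAl /w rowE mulmxK // lorentz_unit.
have -> : dmu phi l (mu *m invmx L) a = \sum_b c b * \sum_k w ord0 k * D b k.
  rewrite /dmu /pd derive1E (near_eq_derive _ lorentz_line).
  apply: derive_val; apply: is_derive_bigsum => b; apply: is_deriveZ.
  exact: smooth_is_derive_along.
rewrite sum_ffun_rcons; apply: eq_bigr => b _; rewrite mulr_sumr; apply: eq_bigr => k _.
rewrite big_ord_recr /= ffun_rcons_max -mulrA /w mxE; congr (_ * (_ * _)).
  by apply: eq_bigr => i _; rewrite ffun_rcons_widen.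
rewrite /dmu ffun_rcons_max /D; congr (pd _ _ _ _); apply/funext => l'; apply/funext => nu.
by congr (phi _ _ _); apply/funext => i; rewrite ffun_rcons_widen.
Qed.

Lemma eq_dmu_timelike m (psi : tfun R m) l mu (a b : 'I_m.+1 -> 'I_4) : timelike mu ->
  a ord_max = b ord_max ->
  (forall nu, timelike nu ->
     psi l nu (a \o widen_ord (leqnSn m)) = psi l nu (b \o widen_ord (leqnSn m))) ->
  dmu psi l mu a = dmu psi l mu b.
Proof. by move=> tm ab psi_ab; rewrite /dmu ab; exact: eq_pd_timelike. Qed.

Lemma dmu_dmuE m (psi : tfun R m) l mu (a : 'I_m.+2 -> 'I_4) :
  dmu (dmu psi) l mu a =
  pd (Some (a ord_max)) (pd (Some (a (widen_ord (leqnSn m.+1) ord_max)))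
    (fun l mu => psi l mu (fun i => a (widen_ord (leqnSn m.+1) (widen_ord (leqnSn m) i))))) l mu.
Proof. by []. Qed.

Lemma tsym_dmu_dmu (phi : tfun R n) :
  (forall a, smooth (fun l mu => phi l mu a)) -> tsym (dmu phi) -> tsym (dmu (dmu phi)).
Proof.
move=> sphi dsym l mu tm.
pose W := widen_ord (leqnSn n.+1).
have W_inj : injective W by move=> x y [] /val_inj.
have W_max x : W x != ord_max by rewrite -val_eqE /= neq_ltn ltn_ord.
pose P (s : 'S_n.+2) := forall a, dmu (dmu phi) l mu (a \o s) = dmu (dmu phi) l mu a.
suff allP : forall s, P s by move=> s a; exact: allP.
apply: (@perm_tperm_ind _ (W ord_max) ord_max).
- exact: W_max.
- move=> s t Ps Pt a.
  have -> : a \o (s * t)%g = (a \o t) \o s by apply/funext => i; rewrite /= permM.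
  by rewrite Ps Pt.
- move=> x y /widen_ord_maxP[x' ->] /widen_ord_maxP[y' ->] a.
  apply: eq_dmu_timelike => [//||nu tn]; first by rewrite /= tpermD // eq_sym W_max.
  rewrite -[RHS](dsym l nu tn (tperm x' y')); congr (dmu phi _ _ _).
  by apply/funext => i; rewrite /= -(inj_tperm _ _ _ W_inj).
- move=> a; rewrite !dmu_dmuE /= tpermR tpermL.
  have -> : (fun i => a (tperm (W ord_max) ord_max (W (widen_ord (leqnSn n) i)))) =
            (fun i => a (W (widen_ord (leqnSn n) i))).
    apply/funext => i; rewrite tpermD // eq_sym ?W_max // (inj_eq W_inj).
    by rewrite -val_eqE /= neq_ltn ltn_ord.
  exact: smooth_pdC.
Qed.

End TensorFamily.

Theorem proposition2 (R : realType) (n : nat) (phi : tfun R n) :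
  inF phi -> inF (dmu phi).
Proof.
case=> sphi cov _ dsym; split.
- by move=> a; exact: smooth_pd.
- exact: covariant_dmu.
- exact: dsym.
- exact: tsym_dmu_dmu.
Qed.
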